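(* Consider the parametrized elliptic PDE $\mathcal{L}(u(\mathbf{P}),\mathbf{P})=f(\mathbf{P})$ with parameters $\mathbf{P}\in\mathcal{P}\subset\mathbb{R}^{N_P}$, unique solution $u(\mathbf{P})$ and quantity of interest $q(\mathbf{P})=Q(u(\mathbf{P}))$. Let $J_1:\mathcal{P}\to\mathbb{R}$ be a cost function and $G_1^{(j)}(\mathbf{P},q(\mathbf{P}))$, $j=1,\dots,N_G$, constraint functions. Let $D=\mathrm{diag}(D_{11},\dots,D_{N_PN_P})$ be the positive diagonal scaling matrix of the uncertainty set, with all diagonal entries equal. Let $\boldsymbol{\Delta}'=(\Delta_1',\dots,\Delta_{N_P}')$ be a random perturbation with $\mathbb{E}[\Delta_i']=0$, and write $\mathbf{P}=\overline{\mathbf{P}}+\boldsymbol{\Delta}'$. Assume: (i) $Q$ is linear in $u$, i.e. $\partial Q/\partial u$ is constant; (ii) the perturbations $\Delta_i'$ are independent and identically distributed, and each $\Delta_i'$ is symmetric around $0$. Choose $\lambda=D_{ii}/\mathrm{std}[\Delta_i']$; by the equal-diagonal assumption on $D$ and (ii), this value does not depend on $i$. Then the following two problems are equivalent. Linearized stochastic robust problem: $$\min_{\overline{\mathbf{P}}\in\overline{\mathcal{P}}_2}\; J_1(\overline{\mathbf{P}})+\lambda\,\big\|\mathrm{std}[\boldsymbol{\Delta}']\circ\nabla_{\overline{\mathbf{P}}}J_1(\overline{\mathbf{P}})\big\|_2$$ subject to $$G_1^{(j)}(\overline{\mathbf{P}},q(\overline{\mathbf{P}}))+\lambda\,\big\|\mathrm{std}[\boldsymbol{\Delta}']\circ\nabla_{\overline{\mathbf{P}}}G_1^{(j)}(\overline{\mathbf{P}},q(\overline{\mathbf{P}}))\big\|_2\le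 0,\qquad j=1,\dots,N_G.$$ Linearized worst-case robust problem with the 2-norm: $$\min_{\overline{\mathbf{P}}\in\overline{\mathcal{P}}_2}\; J_1(\overline{\mathbf{P}})+\big\|D\,\nabla_{\overline{\mathbf{P}}}J_1(\overline{\mathbf{P}})\big\|_2$$ subject to $$G_1^{(j)}(\overline{\mathbf{P}},q(\overline{\mathbf{P}}))+\big\|D\,\nabla_{\overline{\mathbf{P}}}G_1^{(j)}(\overline{\mathbf{P}},q(\overline{\mathbf{P}}))\big\|_2\le 0,\qquad j=1,\dots,N_G.$$
   Context: Notation and definitions used in the statement: - $\mathcal{P}\subset\mathbb{R}^{N_P}$ is a bounded parameter domain. - $\mathcal{L}$ is an elliptic operator, e.g. $\mathcal{L}(u,\mathbf{P})=\mathrm{div}(a(u,\mathbf{P})\nabla u)$, posed on a bounded domain with Dirichlet boundary conditions. - $Q$ is a linear functional of the solution $u$. - The gradients $\nabla_{\overline{\mathbf{P}}}$ are total derivatives with respect to the parameters, taken through the dependence $u=u(\mathbf{P})$. - $\mathrm{std}[\boldsymbol{\Delta}']=(\mathrm{std}[\Delta_1'],\dots,\mathrm{std}[\Delta_{N_P}'])$ is the vector of standard deviations, and $\circ$ denotes the componentwise (Hadamard) product. - The uncertainty set in the 2-norm is $\mathcal{U}_2=\{\boldsymbol{\Delta}\in\mathbb{R}^{N_P}:\|D^{-1}\boldsymbol{\Delta}\|_2\le 1\}$. - The reduced parameter space is $\overline{\mathcal{P}}_2=\{\mathbf{P}\in\mathcal{P}:\mathbf{P}+\boldsymbol{\Delta}\in\mathcal{P}\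 \text{for all}\ \boldsymbol{\Delta}\in\mathcal{U}_2\}$. Origin of the two problems: - The stochastic problem comes from $\min\ \mathbb{E}[J_1]+\lambda\,\mathrm{std}[J_1]$ subject to $\mathbb{E}[G_1^{(j)}]+\lambda\,\mathrm{std}[G_1^{(j)}]\le0$, after a first-order Taylor linearization in $\boldsymbol{\Delta}'$. - The worst-case problem comes from $\min_{\overline{\mathbf{P}}}\max_{\boldsymbol{\Delta}\in\mathcal{U}_2}J_1(\overline{\mathbf{P}}+\boldsymbol{\Delta})$ subject to $\max_{\boldsymbol{\Delta}\in\mathcal{U}_2}G_1^{(j)}\le0$, after first-order linearization. *)

From HB Require Import structures.
From mathcomp Require Import all_boot all_order all_algebra.
From mathcomp Require Import all_classical all_reals all_analysis.
Set Implicit Arguments. Unset Strict Implicit. Unset Printing Implicit Defensive.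
Import Order.TTheory GRing.Theory Num.Theory.
Import numFieldNormedType.Exports.
Local Open Scope classical_set_scope.
Local Open Scope ring_scope.

Section Defs.
Variable R : realType.

Definition norm2 n (v : 'rV[R]_n) : R := Num.sqrt (\sum_(i < n) v ord0 i ^+ 2).

Definition grad n (f : 'rV[R]_n -> R) (x : 'rV[R]_n) : 'rV[R]_n :=
  \row_(i < n) 'D_(delta_mx 0 i) f x.

Definition hadamard n (a b : 'rV[R]_n) : 'rV[R]_n := \row_(i < n) (a ord0 i * b ord0 i).

Definition diag_act n (d v : 'rV[R]_n) : 'rV[R]_n := \row_(i < n) (d ord0 i * v ord0 i).
Definition diag_inv_act n (d v : 'rV[R]_n) : 'rV[R]_n := \row_(i < n) (v ord0 i / d ord0 i).

Definition U2 n (d : 'rV[R]_n) : set 'rV[R]_n := [set Dl | norm2 (diag_inv_act d Dl) <= 1].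

Definition Pbar2 n (Pdom : set 'rV[R]_n) (d : 'rV[R]_n) : set 'rV[R]_n :=
  [set P | Pdom P /\ forall Dl, U2 d Dl -> Pdom (P + Dl)].

Definition feasible n NG (S : set 'rV[R]_n) (cons : 'I_NG -> 'rV[R]_n -> R) :
  set 'rV[R]_n := [set P | S P /\ forall j, cons j P <= 0].

Definition is_solution n NG (S : set 'rV[R]_n) (obj : 'rV[R]_n -> R)
  (cons : 'I_NG -> 'rV[R]_n -> R) : set 'rV[R]_n :=
  [set P | feasible S cons P /\ forall P', feasible S cons P' -> obj P <= obj P'].

End Defs.

Section Prob.
Context d (T : measurableType d) (R : realType) (Pr : probability T R).

Definition mutually_independent n (X : 'I_n -> {RV Pr >-> R}) : Prop :=
  forall (S : {set 'I_n}) (A : 'I_n -> set R),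
    (forall i, measurable (A i)) ->
    Pr (\big[setI/setT]_(i in S) (X i @^-1` A i)) =
    (\prod_(i in S) Pr (X i @^-1` A i))%E.

Definition identically_distributed n (X : 'I_n -> {RV Pr >-> R}) : Prop :=
  forall i j (A : set R), measurable A -> Pr (X i @^-1` A) = Pr (X j @^-1` A).

Definition symmetric_rv (X : {RV Pr >-> R}) : Prop :=
  forall A : set R, measurable A -> Pr (X @^-1` A) = Pr ((fun w => - X w) @^-1` A).

Definition stdev (X : {RV Pr >-> R}) : R := Num.sqrt (fine 'V_Pr[X]).

Definition stdev_vec n (X : 'I_n -> {RV Pr >-> R}) : 'rV[R]_n :=
  \row_(i < n) stdev (X i).

End Prob.

From HB Require Import structures.
From mathcomp Require Import all_boot all_order all_algebra.
From mathcomp Require Import all_classical all_reals all_analysis.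
From mathcomp Require Import measurable_realfun.
Import Order.TTheory GRing.Theory Num.Theory.
Import numFieldNormedType.Exports.
Set Implicit Arguments. Unset Strict Implicit. Unset Printing Implicit Defensive.
Local Open Scope classical_set_scope.
Local Open Scope ring_scope.

(** Identically distributed [Delta_i'] have a common standard deviation [s],
so [lam = D_ii / s] satisfies [lam * s = D_ii] for every [i] and the weighted
gradient [lam * (std[Delta'] o grad)] is exactly [D grad].  Hence the penalised
objectives and constraints of the two problems coincide as functions. *)

Section same_law.
Context d (T : measurableType d) (R : realType) (P : probability T R).
Variables X Y : {RV P >-> R}.
Hypothesis XY : forall A : set R, measurable A -> P (X @^-1` A) = P (Y @^-1` A).

Lemma ge0_integral_same_law (f : R -> \bar R) :
  measurable_fun setT f -> (forall y, (0 <= f y)%E) ->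
  (\int[P]_x (f \o X) x = \int[P]_x (f \o Y) x)%E.
Proof.
move=> mf f0; rewrite -!ge0_integral_distribution //.
by apply: eq_measure_integral => A mA _; exact: XY.
Qed.

Lemma integral_same_law (f : R -> \bar R) :
  measurable_fun setT f -> P.-integrable setT (f \o X) ->
  P.-integrable setT (f \o Y) ->
  (\int[P]_x (f \o X) x = \int[P]_x (f \o Y) x)%E.
Proof.
move=> mf iX iY; rewrite -!integral_distribution //.
by apply: eq_measure_integral => A mA _; exact: XY.
Qed.

Lemma variance_same_law :
  (X : T -> R) \in Lfun P 2%:E -> (Y : T -> R) \in Lfun P 2%:E ->
  'V_P[X] = 'V_P[Y].
Proof.
move=> X2 Y2; rewrite !varianceE //.
have mean_eq : ('E_P[X] = 'E_P[Y])%E.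
  have Pfin := fin_num_measure P _ measurableT.
  rewrite !expectation_def; apply: integral_same_law => //.
  - by apply/Lfun1_integrable; exact: Lfun_subset12.
  - by apply/Lfun1_integrable; exact: Lfun_subset12.
have moment2_eq : ('E_P[X ^+ 2] = 'E_P[Y ^+ 2])%E.
  rewrite !unlock; apply: (@ge0_integral_same_law (fun y => (y ^+ 2)%:E)).
  - by apply/measurable_EFinP; exact: measurable_funX.
  - by move=> y; rewrite lee_fin sqr_ge0.
by rewrite mean_eq moment2_eq.
Qed.

Lemma stdev_same_law :
  (X : T -> R) \in Lfun P 2%:E -> (Y : T -> R) \in Lfun P 2%:E ->
  stdev X = stdev Y.
Proof. by move=> X2 Y2; rewrite /stdev variance_same_law. Qed.

End same_law.

Lemma stdev_gt0 d (T : measurableType d) (R : realType) (P : probability T R)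
    (X : {RV P >-> R}) :
  (X : T -> R) \in Lfun P 2%:E -> (0 < 'V_P[X])%E -> 0 < stdev X.
Proof.
move=> X2; rewrite /stdev sqrtr_gt0.
by have := variance_fin_num X2; case: 'V_P[X]%E.
Qed.

Lemma norm2Z (R : realType) n (c : R) (v : 'rV[R]_n) :
  norm2 (c *: v) = `|c| * norm2 v.
Proof.
rewrite /norm2 -sqrtr_sqr -sqrtrM ?sqr_ge0 // mulr_sumr.
by congr Num.sqrt; apply: eq_bigr => i _; rewrite mxE exprMn.
Qed.

Lemma diag_act_hadamard (R : realType) n (c : R) (dg s g : 'rV[R]_n) :
  (forall i, dg ord0 i = c * s ord0 i) ->
  diag_act dg g = c *: hadamard s g.
Proof.
by move=> dgE; apply/rowP => i; rewrite !mxE dgE mulrA.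
Qed.

Theorem theorem1
  (R : realType) (NP NG : nat)
  (* parameter domain *)
  (Pdom : set 'rV[R]_NP) (HPb : bounded_set Pdom)
  (* abstract parametrized PDE  L(u(P),P) = f(P)  with unique solution u(P) *)
  (V W : lmodType R) (L : V -> 'rV[R]_NP -> W) (f : 'rV[R]_NP -> W)
  (u : 'rV[R]_NP -> V)
  (Hsol : forall P, Pdom P -> L (u P) P = f P)
  (Huniq : forall P v, Pdom P -> L v P = f P -> v = u P)
  (* (i) quantity of interest Q linear in u *)
  (Q : {linear V -> R})
  (* cost and constraint functions *)
  (J1 : 'rV[R]_NP -> R) (G1 : 'I_NG -> 'rV[R]_NP -> R -> R)
  (* diagonal scaling matrix D = diag(dg), positive with equal entries *)
  (dg : 'rV[R]_NP) (Hdpos : forall i, 0 < dg ord0 i)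
  (Hdeq : forall i j, dg ord0 i = dg ord0 j)
  (* random perturbation Delta' *)
  (dT : measure_display) (Om : measurableType dT) (Pr : probability Om R)
  (Dl : 'I_NP -> {RV Pr >-> R})
  (HL2 : forall i, (Dl i : Om -> R) \in Lfun Pr 2%:E)
  (Hvar : forall i, (0 < 'V_Pr[Dl i])%E)
  (Hmean : forall i, ('E_Pr[Dl i] = 0)%E)
  (* (ii) i.i.d. and symmetric around 0 *)
  (Hind : mutually_independent Dl) (Hid : identically_distributed Dl)
  (Hsym : forall i, symmetric_rv (Dl i))
  (* lambda = D_ii / std[Delta_i'] *)
  (lam : R) (Hlam : exists i, lam = dg ord0 i / stdev (Dl i)) :
  let q := fun P => Q (u P) in
  let S := Pbar2 Pdom dg in
  let obj_st := fun Pb => J1 Pb + lam * norm2 (hadamard (stdev_vec Dl) (grad J1 Pb)) in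
  let cons_st := fun j Pb => G1 j Pb (q Pb) +
      lam * norm2 (hadamard (stdev_vec Dl) (grad (fun P => G1 j P (q P)) Pb)) in
  let obj_wc := fun Pb => J1 Pb + norm2 (diag_act dg (grad J1 Pb)) in
  let cons_wc := fun j Pb => G1 j Pb (q Pb) +
      norm2 (diag_act dg (grad (fun P => G1 j P (q P)) Pb)) in
  feasible S cons_st = feasible S cons_wc /\
  (forall Pb, feasible S cons_st Pb -> obj_st Pb = obj_wc Pb) /\
  is_solution S obj_st cons_st = is_solution S obj_wc cons_wc.
Proof.
move=> q S obj_st cons_st obj_wc cons_wc.
have [i0 lamE] := Hlam.
have stdE i : stdev (Dl i) = stdev (Dl i0).
  exact: stdev_same_law (Hid i i0) (HL2 i) (HL2 i0).
have s0_gt0 : 0 < stdev (Dl i0) by exact: stdev_gt0.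
have lam_ge0 : 0 <= lam by rewrite lamE divr_ge0 ?ltW.
have dgE i : dg ord0 i = lam * stdev_vec Dl ord0 i.
  by rewrite mxE stdE lamE divfK ?gt_eqF // Hdeq.
have weightE (g : 'rV[R]_NP) :
    lam * norm2 (hadamard (stdev_vec Dl) g) = norm2 (diag_act dg g).
  by rewrite (diag_act_hadamard g dgE) norm2Z ger0_norm.
have -> : obj_st = obj_wc by apply: funext => Pb; rewrite /obj_st weightE.
have -> : cons_st = cons_wc.
  by apply: funext => j; apply: funext => Pb; rewrite /cons_st weightE.
by [].
Qed.
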